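(* Let $m,n,k$ be positive integers. If $\vartheta\big(\overline{G_D(K_{m,n})}\big) > k$ for every circular drawing $D$ of $K_{m,n}$, then $\nu_k(K_{m,n})>0$.
   Context: A circular drawing $D$ of $K_{m,n}$ places the $m+n$ vertices at distinct points of a circle and draws each edge as the straight chord between its endpoints. The auxiliary graph $G_D(K_{m,n})$ has as vertex set the edge set of $K_{m,n}$, two vertices being adjacent iff the corresponding chords cross in $D$. $\overline{H}$ denotes the complement of a graph $H$. For a graph $G=(V,E)$, the Lovász number is $\vartheta(G):=\max\{\sum_{i,j\in V}X_{ij} : X\in\mathbb{R}^{V\times V}\text{ positive semidefinite},\ X_{ij}=0 \text{ for } \{i,j\}\in E,\ \mathrm{trace}(X)=1\}$. A book with $k$ pages consists of a line (the spine) and $k$ half-planes (pages) bounded by it; a $k$-page drawing places vertices on the spine and each edge in a single page; $\nu_k(G)$ is the minimum number of crossings over all $k$-page drawings of $G$. *)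

From HB Require Import structures.
From mathcomp Require Import all_boot all_order all_algebra.
From mathcomp Require Import classical_sets reals.
Set Implicit Arguments. Unset Strict Implicit. Unset Printing Implicit Defensive.
Import Order.TTheory GRing.Theory Num.Theory.

Definition Kmn_vert (m n : nat) : finType := ('I_m + 'I_n)%type.
Definition Kmn_edge (m n : nat) : finType := ('I_m * 'I_n)%type.

(* Circular drawing: the vertices are placed at distinct points of a circle;
   up to rotation this is an injective labelling pos of the vertices, read
   cyclically.  Two straight chords cross iff their four endpoints are
   distinct and interleave in the cyclic order. *)
Definition chords_cross (m n : nat) (pos : Kmn_vert m n -> nat)
    (e f : Kmn_edge m n) : bool :=
  let a := pos (inl e.1) in let b := pos (inr e.2) in
  let c := pos (inl f.1) in let d := pos (inr f.2) in
  [&& e.1 != f.1, e.2 != f.2 &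
   (minn a b < minn c d < maxn a b) && (maxn a b < maxn c d)
   || (minn c d < minn a b < maxn c d) && (maxn c d < maxn a b)].

Definition GD (m n : nat) (pos : Kmn_vert m n -> nat) : rel (Kmn_edge m n) :=
  chords_cross pos.

Definition complement_rel (V : finType) (adj : rel V) : rel V :=
  fun x y => (x != y) && ~~ adj x y.

Local Open Scope ring_scope.

Definition psd (R : realType) (V : finType) (X : V -> V -> R) : Prop :=
  (forall i j, X i j = X j i) /\
  (forall v : V -> R, 0 <= \sum_(i : V) \sum_(j : V) v i * X i j * v j).

(* Lovasz number: max (= sup; the max is attained) of sum_{ij} X_ij over PSD X
   with X_ij = 0 on edges and trace X = 1. *)
Definition lovasz_theta (R : realType) (V : finType) (adj : rel V) : R :=
  sup [set s : R | exists X : V -> V -> R,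
        [/\ psd X, (forall i j, adj i j -> X i j = 0),
            \sum_(i : V) X i i = 1 &
            s = \sum_(i : V) \sum_(j : V) X i j]].

Local Close Scope ring_scope.

(* k-page book drawings of K_{m,n}: vertices at distinct positions on the
   spine (injective pos), each edge on one of k pages.  Two edges on the same
   page cross iff their endpoints interleave along the spine; each crossing
   pair {e,f} is counted once, via the ordered pair with min-end of e first. *)
Definition book_crossings (m n k : nat)
    (pos : {ffun Kmn_vert m n -> 'I_(m + n)})
    (page : {ffun Kmn_edge m n -> 'I_k}) : nat :=
  #|[set ef : (Kmn_edge m n * Kmn_edge m n)%type |
      let e := ef.1 in let f := ef.2 in
      let a := val (pos (inl e.1)) in let b := val (pos (inr e.2)) in
      let c := val (pos (inl f.1)) in let d := val (pos (inr f.2)) in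
      [&& page e == page f,
          minn a b < minn c d < maxn a b & maxn a b < maxn c d]]|.

(* nu_k(K_{m,n}): minimum number of crossings over all k-page drawings.
   The seed (m*n)^2 bounds every book_crossings value, so this is the min. *)
Definition nu_book_Kmn (m n k : nat) : nat :=
  \big[minn/((m * n) ^ 2)]_(d : ({ffun Kmn_vert m n -> 'I_(m + n)} *
                                 {ffun Kmn_edge m n -> 'I_k})%type
                            | injectiveb d.1)
     book_crossings d.1 d.2.

From HB Require Import structures.
From mathcomp Require Import all_boot all_order all_algebra.
From mathcomp Require Import classical_sets reals.
From mathcomp Require Import ring.
Import Order.TTheory GRing.Theory Num.Theory.
Set Implicit Arguments. Unset Strict Implicit. Unset Printing Implicit Defensive.

(* A crossing-free k-page drawing of K_{m,n}, read as a circular drawing D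
   (spine order = cyclic order), splits the edges into k classes of pairwise
   non-crossing chords, i.e. into k cliques of the complement of G_D.  Such a
   clique cover bounds the Lovasz number: for a feasible X and the page
   vectors v_c = 1 - k [page = c], summing v_c^T X v_c >= 0 over the pages c
   gives k (k tr X - sum X) >= 0, i.e. sum X <= k. *)

Local Open Scope ring_scope.

Lemma sum_page_weights (R : comNzRingType) k (p q : 'I_k) :
  \sum_(c < k) (1 - k%:R * (p == c)%:R) * (1 - k%:R * (q == c)%:R) =
  k%:R * (k%:R * (p == q)%:R - 1) :> R.
Proof.
have indicator_sum (r : 'I_k) : \sum_(c < k) (r == c)%:R = 1 :> R.
  by rewrite (bigD1 r) //= eqxx big1 ?addr0 // => c /negPf; rewrite eq_sym => ->.
have delta_sum : \sum_(c < k) (p == c)%:R * (q == c)%:R = (p == q)%:R :> R.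
  rewrite (bigD1 p) //= eqxx mul1r big1 ?addr0 1?eq_sym //.
  by move=> c /negPf; rewrite eq_sym => ->; rewrite mul0r.
under eq_bigr do rewrite mulrBl !mul1r mulrBr mulr1 mulrCA !mulrA -mulrA.
rewrite !sumrB -!mulr_sumr delta_sum !indicator_sum sumr_const card_ord.
rewrite -[1 *+ k]/(k%:R); ring.
Qed.

Section CliqueCover.

Variables (R : realType) (V : finType) (adj : rel V) (k : nat).
Variable page : V -> 'I_k.
Hypothesis page_clique : forall i j, i != j -> page i = page j -> adj i j.

Lemma sum_feasible_le_clique_cover (X : V -> V -> R) :
  psd X -> (forall i j, adj i j -> X i j = 0) -> \sum_i X i i = 1 ->
  \sum_i \sum_j X i j <= k%:R.
Proof.
move=> [_ X_psd] X_adj0 X_tr.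
have k_gt0 : (0 < k)%N. (* with no pages V is empty, so its trace is 0 *)
  case: k page X_tr => [|//] page0; rewrite big1 => [/esym/eqP|i _].
    by rewrite oner_eq0.
  by case: (page0 i).
pose v (c : 'I_k) i : R := 1 - k%:R * (page i == c)%:R.
have pages_nonneg : 0 <= \sum_c \sum_i \sum_j v c i * X i j * v c j.
  by apply: sumr_ge0 => c _; apply: X_psd.
have page_diag i : \sum_j X i j * (page i == page j)%:R = X i i.
  rewrite (bigD1 i) //= eqxx mulr1 big1 ?addr0 // => j ij.
  have [pij|] := eqVneq (page i) (page j); last by rewrite mulr0.
  by rewrite X_adj0 ?mul0r // page_clique // eq_sym.
have pair_sum i j : \sum_c v c i * X i j * v c j =
    k%:R * (k%:R * (X i j * (page i == page j)%:R) - X i j).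
  under eq_bigr do rewrite mulrAC mulrC.
  by rewrite -mulr_sumr sum_page_weights; ring.
have pages_sum : \sum_c \sum_i \sum_j v c i * X i j * v c j =
    k%:R * (k%:R * \sum_i X i i - \sum_i \sum_j X i j).
  rewrite exchange_big mulr_sumr -sumrB mulr_sumr; apply: eq_bigr => i _.
  rewrite -page_diag mulr_sumr -sumrB mulr_sumr exchange_big.
  by apply: eq_bigr => j _; rewrite pair_sum.
by move: pages_nonneg; rewrite pages_sum X_tr mulr1 pmulr_rge0 ?ltr0n // subr_ge0.
Qed.

Lemma lovasz_theta_le_clique_cover : lovasz_theta R adj <= k%:R.
Proof.
rewrite /lovasz_theta; set S := (X in sup X).
have [S_ne|] := boolp.pselect (S !=set0)%classic; last first.
  by move/nonemptyPn => ->; rewrite sup0 ler0n.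
apply: ge_sup => // _ [X [X_psd X_adj0 X_tr ->]].
exact: sum_feasible_le_clique_cover.
Qed.

End CliqueCover.

Local Close Scope ring_scope.

Lemma crossing_free_page_noncrossing m n k
    (pos : {ffun Kmn_vert m n -> 'I_(m + n)}) (page : {ffun Kmn_edge m n -> 'I_k})
    (e f : Kmn_edge m n) :
  book_crossings pos page = 0 -> page e = page f ->
  ~~ chords_cross (fun v => val (pos v)) e f.
Proof.
move=> /eqP; rewrite cards_eq0 => /eqP no_crossing pef.
have not_counted (ef : Kmn_edge m n * Kmn_edge m n) :
    ef \notin [set ef | let e := ef.1 in let f := ef.2 in
      let a := val (pos (inl e.1)) in let b := val (pos (inr e.2)) in
      let c := val (pos (inl f.1)) in let d := val (pos (inr f.2)) in
      [&& page e == page f, minn a b < minn c d < maxn a b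
        & maxn a b < maxn c d]].
  by rewrite no_crossing inE.
apply/and3P => -[_ _ /orP[] /andP[] /andP[lo hi] out].
- by move: (not_counted (e, f)); rewrite inE /= pef eqxx lo hi out.
- by move: (not_counted (f, e)); rewrite inE /= pef eqxx lo hi out.
Qed.

Theorem corollary11 (R : realType) (m n k : nat) :
  0 < m -> 0 < n -> 0 < k ->
  (forall pos : Kmn_vert m n -> nat, injective pos ->
     (k%:R < lovasz_theta R (complement_rel (GD pos)))%R) ->
  0 < nu_book_Kmn m n k.
Proof.
move=> m_gt0 n_gt0 _ theta_gt_k; rewrite /nu_book_Kmn.
apply: (big_ind (fun x => 0 < x)).
- by rewrite expn_gt0 muln_gt0 m_gt0 n_gt0.
- by move=> x y x_gt0 y_gt0; rewrite leq_min x_gt0 y_gt0.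
case=> pos page /= /injectiveP pos_inj; rewrite lt0n; apply/eqP => crossing_free.
have circ_inj : injective (fun v => val (pos v)) by move=> x y /val_inj/pos_inj.
move: (theta_gt_k _ circ_inj); apply/negP; rewrite -leNgt.
apply: (@lovasz_theta_le_clique_cover R _ _ k page) => e f ef pef.
by rewrite /complement_rel ef (crossing_free_page_noncrossing crossing_free pef).
Qed.
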